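(* Let $\mathcal{D}=\{(x_i,a_i,y_i)\}_{i=1}^N$ be a dataset with $a_i\in\{1,2\}$, $y_i\in\{0,1\}$. The procedure ''GABOS learning with post-processing'' (described in the context), with misclassification loss and with bias measured by demographic parity or equal opportunity, is slack-consistent: for every individual $(x,a)$ (not necessarily in $\mathcal{D}$), the prediction $f_\beta(x,a)$ of the returned classifier is monotonic in the slack $\beta>0$.
   Context: GABOS learning with post-processing, for slack $\beta>0$: (1) Split $\mathcal{D}$ into $\mathcal{D}_j=\{(x_i,a_i,y_i): a_i=j\}$, $j=1,2$. (2) For each $j$ fix (independently of $\beta$) a finite partition $c_j:\mathcal{X}\to\{1,\dots,M\}$ of the feature space such that every cell contains at least one member of $\mathcal{D}_j$ (e.g. obtained by clustering or a decision tree). (3) For each $j$ and cell $m$ set $f_j(m)=\frac{|\{i: y_i=1, (x_i,a_i,y_i)\in\mathcal{D}_j, c_j(x_i)=m\}|}{|\{i:(x_i,a_i,y_i)\in\mathcal{D}_j, c_j(x_i)=m\}|}$. (4) Define the score $\mathcal{R}(x,a)=f_a(c_a(x))$ and run the post-processing method below on $\mathcal{R}$ with slack $\beta$; return the resulting thresholded classifier $f_\beta$. Post-processing: a normalized threshold $\tau\in[0,1]$ for group $a$ is a threshold classifier on $\mathcal{R}$ within group $a$, randomized over at most two adjacent deterministic thresholds, with positive prediction rate $1-\tau$ in group $a$ on $\mathcal{D}$; a pair $(\tau_1,\tau_2)$ defines a classifier with misclassification loss $\mathcal{L}(\tau_1,\tau_2)$ on $\mathcal{D}$ and bias $\mathcal{B}(\tau_1,\tau_2)$.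 Among all $(\tau_1,\tau_2)\in[0,1]^2$ minimizing $\mathcal{L}$ subject to $|\mathcal{B}|\le\beta$, keep those with smallest $|\mathcal{B}|$, then those with smallest $\tau_1$, then return the one with smallest $\tau_2$. Bias: for a classifier $f$ with positive-prediction probability $f(x,a)\in[0,1]$, demographic-parity bias is $\frac{\sum_i f(x_i,a_i)\mathbb{1}[a_i=1]}{\sum_i\mathbb{1}[a_i=1]}-\frac{\sum_i f(x_i,a_i)\mathbb{1}[a_i=2]}{\sum_i\mathbb{1}[a_i=2]}$; equal-opportunity bias is the same with $y_i=1$ added to every indicator. Slack-consistency: for every $(x,a)$ and all $\beta_1<\beta_2<\beta_3$, either $f_{\beta_1}(x,a)\le f_{\beta_2}(x,a)\le f_{\beta_3}(x,a)$ or $f_{\beta_1}(x,a)\ge f_{\beta_2}(x,a)\ge f_{\beta_3}(x,a)$. *)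

From HB Require Import structures.
From mathcomp Require Import all_boot all_order all_algebra.
From mathcomp Require Import reals.
Set Implicit Arguments. Unset Strict Implicit. Unset Printing Implicit Defensive.
Import Order.TTheory GRing.Theory Num.Theory.
Local Open Scope ring_scope.

Definition g1 : 'I_2 := @Ordinal 2 0 isT.
Definition g2 : 'I_2 := @Ordinal 2 1 isT.

(* With t a score value this is the
   mixture (weight p) of the two adjacent deterministic thresholds
   [r >= t] and [r > t]. *)
Definition thr (R : realFieldType) (t p r : R) : R :=
  if t < r then 1 else if r == t then p else 0.

Definition rate (R : realFieldType) (X : Type) (N : nat) (x : 'I_N -> X)
  (a : 'I_N -> 'I_2) (s : X -> 'I_2 -> R) (j : 'I_2) (t p : R) : R :=
  (\sum_(i < N | a i == j) thr t p (s (x i) j)) / (#|[pred i | a i == j]|)%:R.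

Definition is_nthr (R : realFieldType) (X : Type) (N : nat) (x : 'I_N -> X)
  (a : 'I_N -> 'I_2) (s : X -> 'I_2 -> R) (j : 'I_2) (tau t p : R) : Prop :=
  0 <= tau <= 1 /\ 0 <= p <= 1 /\ rate x a s j t p = 1 - tau.

Definition clf (R : realFieldType) (X : Type) (s : X -> 'I_2 -> R)
  (tt pp : 'I_2 -> R) (x0 : X) (j : 'I_2) : R :=
  thr (tt j) (pp j) (s x0 j).

Definition loss (R : realFieldType) (X : Type) (N : nat) (x : 'I_N -> X)
  (a : 'I_N -> 'I_2) (y : 'I_N -> bool) (f : X -> 'I_2 -> R) : R :=
  (\sum_(i < N) (if y i then 1 - f (x i) (a i) else f (x i) (a i))) / N%:R.

Inductive fairness := DP | EO.

Definition bcond (N : nat) (y : 'I_N -> bool) (k : fairness) (i : 'I_N) : bool :=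
  match k with DP => true | EO => y i end.

Definition group_rate (R : realFieldType) (X : Type) (N : nat) (x : 'I_N -> X)
  (a : 'I_N -> 'I_2) (y : 'I_N -> bool) (k : fairness) (f : X -> 'I_2 -> R)
  (j : 'I_2) : R :=
  (\sum_(i < N | (a i == j) && bcond y k i) f (x i) (a i))
    / (#|[pred i | (a i == j) && bcond y k i]|)%:R.

Definition bias (R : realFieldType) (X : Type) (N : nat) (x : 'I_N -> X)
  (a : 'I_N -> 'I_2) (y : 'I_N -> bool) (k : fairness) (f : X -> 'I_2 -> R) : R :=
  group_rate x a y k f g1 - group_rate x a y k f g2.

Definition postproc_opt (R : realFieldType) (X : Type) (N : nat) (x : 'I_N -> X)
  (a : 'I_N -> 'I_2) (y : 'I_N -> bool) (k : fairness) (s : X -> 'I_2 -> R)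
  (beta : R) (tau tt pp : 'I_2 -> R) : Prop :=
  (forall j, is_nthr x a s j (tau j) (tt j) (pp j)) /\
  `|bias x a y k (clf s tt pp)| <= beta /\
  forall tau' tt' pp' : 'I_2 -> R,
    (forall j, is_nthr x a s j (tau' j) (tt' j) (pp' j)) ->
    `|bias x a y k (clf s tt' pp')| <= beta ->
    let L := loss x a y (clf s tt pp) in
    let L' := loss x a y (clf s tt' pp') in
    let B := `|bias x a y k (clf s tt pp)| in
    let B' := `|bias x a y k (clf s tt' pp')| in
    L < L' \/ (L = L' /\ (B < B' \/ (B = B' /\
      (tau g1 < tau' g1 \/ (tau g1 = tau' g1 /\ tau g2 <= tau' g2))))).

Definition gabos_freq (R : realFieldType) (X : Type) (N M : nat) (x : 'I_N -> X)
  (a : 'I_N -> 'I_2) (y : 'I_N -> bool) (c : 'I_2 -> X -> 'I_M)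
  (j : 'I_2) (m : 'I_M) : R :=
  (#|[pred i | (a i == j) && y i && (c j (x i) == m)]|)%:R
    / (#|[pred i | (a i == j) && (c j (x i) == m)]|)%:R.

Definition gabos_score (R : realFieldType) (X : Type) (N M : nat) (x : 'I_N -> X)
  (a : 'I_N -> 'I_2) (y : 'I_N -> bool) (c : 'I_2 -> X -> 'I_M)
  (x0 : X) (j : 'I_2) : R :=
  gabos_freq R x a y c j (c j x0).

From HB Require Import structures.
From mathcomp Require Import all_boot all_order all_algebra.
From mathcomp Require Import reals boolp.
From mathcomp Require Import ring lra.
Import Order.TTheory GRing.Theory Num.Theory.
Local Open Scope ring_scope.
Set Implicit Arguments. Unset Strict Implicit. Unset Printing Implicit Defensive.

(* The GABOS score is calibrated on D: within a group every score value is the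
   empirical positive rate of its cell, so sum_i h(R_i) y_i = sum_i h(R_i) R_i
   for every h.  Hence, among the classifiers h o R with a prescribed fairness
   rate u in group j (positive rate for DP, true positive rate for EO), a
   threshold classifier has the least misclassification loss (an exchange
   argument), and threshold classifiers are totally ordered pointwise.  So the
   post-processing only chooses the rates (u1, u2): the optimal classifier
   theta_j(u) is pointwise nondecreasing in u, its loss phi_j(u) is convex and
   its normalized threshold tau_j(u) is strictly decreasing.  In the program
   "minimise phi_1(u1) + phi_2(u2) subject to |u1 - u2| <= beta, ties broken by
   |u1 - u2|, tau_1, tau_2", convexity forbids the sign of u1 - u2 to flip as
   beta grows, and exchanging the gaps of two optima shows that u1 and u2 move
   apart monotonically once the constraint binds.  Composing with the monotone
   theta_j gives slack-consistency. *)

Section UnitInterval.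
Variable R : realFieldType.

Definition in01 (u : R) := 0 <= u <= 1.

Definition convex01 (p : R -> R) := forall u v l, in01 u -> in01 v -> in01 l ->
  p (l * u + (1 - l) * v) <= l * p u + (1 - l) * p v.

Definition decreasing01 (T : R -> R) :=
  forall u v, in01 u -> in01 v -> u < v -> T v < T u.

Definition between (u v w : R) := (u <= v <= w) \/ (w <= v <= u).

Lemma between_eql u v w : u = v -> between u v w.
Proof. by move=> ->; case: (lerP v w) => h; [left|right]; rewrite lexx ?h ?ltW. Qed.

Lemma between_eqr u v w : v = w -> between u v w.
Proof. by move=> ->; case: (lerP u w) => h; [left|right]; rewrite lexx ?h ?ltW. Qed.

Lemma between_homo (f : R -> R) u v w :
  (forall s t, in01 s -> in01 t -> s <= t -> f s <= f t) ->
  in01 u -> in01 v -> in01 w -> between u v w -> between (f u) (f v) (f w).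
Proof.
move=> hf hu hv hw [/andP[uv vw]|/andP[wv vu]]; [left|right];
  by rewrite !hf.
Qed.

Lemma in01_convex_comb u v l :
  in01 u -> in01 v -> in01 l -> in01 (l * u + (1 - l) * v).
Proof. rewrite /in01 => /andP[? ?] /andP[? ?] /andP[? ?]; apply/andP; split; nra. Qed.

Lemma decreasing01_le_inv T u v :
  decreasing01 T -> in01 u -> in01 v -> T u <= T v -> v <= u.
Proof.
move=> hT hu hv h; rewrite leNgt; apply/negP => /(hT _ _ hu hv).
by rewrite ltNge h.
Qed.

Lemma convex01_inner_sum p a b c d : convex01 p -> in01 a -> in01 d ->
  a <= b <= d -> a <= c <= d -> b + c = a + d -> p b + p c <= p a + p d.
Proof.
move=> cvx ha hd /andP[ab bd] /andP[ac cd] e.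
have [ead|nad] := eqVneq a d.
  subst d; have -> : b = a by lra.
  by have -> : c = a by lra.
have dap : 0 < d - a by rewrite subr_gt0 lt_neqAle nad /=; lra.
set l := (d - b) / (d - a).
have hl : in01 l.
  by apply/andP; split; [apply: divr_ge0; lra | rewrite ler_pdivrMr //; lra].
have hl' : in01 (1 - l) by move: hl => /andP[? ?]; apply/andP; split; lra.
have eb : b = l * a + (1 - l) * d by rewrite /l; field; lra.
have ec : c = (1 - l) * a + (1 - (1 - l)) * d.
  have -> : c = a + d - b by lra.
  by rewrite /l; field; lra.
have := cvx _ _ _ ha hd hl; have := cvx _ _ _ ha hd hl'; rewrite -eb -ec; lra.
Qed.

Lemma convex01_between_sum p u v s t : convex01 p -> in01 u -> in01 v ->
  between u s v -> between u t v -> s + t = u + v -> p s + p t <= p u + p v.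
Proof.
move=> cvx hu hv hs ht e; have [uv|vu] := lerP u v.
  apply: convex01_inner_sum => //.
  - by case: hs => /andP[? ?]; apply/andP; split; lra.
  - by case: ht => /andP[? ?]; apply/andP; split; lra.
rewrite [p u + _]addrC; apply: convex01_inner_sum => //.
- by case: hs => /andP[? ?]; apply/andP; split; lra.
- by case: ht => /andP[? ?]; apply/andP; split; lra.
- by rewrite e addrC.
Qed.

Lemma avg_in01 (I : finType) (P : pred I) (h : I -> R) :
  (forall i, P i -> in01 (h i)) -> in01 ((\sum_(i | P i) h i) / #|P|%:R).
Proof.
move=> hh; have [->|cP] := posnP #|P|; first by rewrite invr0 mulr0 /in01 lexx ler01.
have cPR : 0 < #|P|%:R :> R by rewrite ltr0n.
apply/andP; split.
  by apply: divr_ge0; [apply: sumr_ge0 => i /hh /andP[] | apply: ltW].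
by rewrite ler_pdivrMr // mul1r -sumr_const; apply: ler_sum => i /hh /andP[].
Qed.

End UnitInterval.

Section LexProgram.
Variables (R : realFieldType) (phi1 phi2 tau1 tau2 : R -> R).
Hypotheses (phi1_cvx : convex01 phi1) (phi2_cvx : convex01 phi2).
Hypotheses (tau1_decr : decreasing01 tau1) (tau2_decr : decreasing01 tau2).

Definition cost (u1 u2 : R) := phi1 u1 + phi2 u2.

Definition lex_le (u1 u2 v1 v2 : R) :=
  let L := cost u1 u2 in let L' := cost v1 v2 in
  let B := `|u1 - u2| in let B' := `|v1 - v2| in
  L < L' \/ (L = L' /\ (B < B' \/ (B = B' /\
      (tau1 u1 < tau1 v1 \/ (tau1 u1 = tau1 v1 /\ tau2 u2 <= tau2 v2))))).

Definition lex_opt (b u1 u2 : R) := [/\ in01 u1, in01 u2, `|u1 - u2| <= b &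
  forall v1 v2, in01 v1 -> in01 v2 -> `|v1 - v2| <= b -> lex_le u1 u2 v1 v2].

Lemma lex_le_cost u1 u2 v1 v2 : lex_le u1 u2 v1 v2 -> cost u1 u2 <= cost v1 v2.
Proof. by case=> [/ltW|[-> _]]. Qed.

Lemma lex_le_gap u1 u2 v1 v2 : lex_le u1 u2 v1 v2 -> cost u1 u2 = cost v1 v2 ->
  `|u1 - u2| <= `|v1 - v2|.
Proof. by case=> [+ e|[_ [/ltW|[-> _]]]] //; rewrite e ltxx. Qed.

Lemma lex_le_tau u1 u2 v1 v2 : lex_le u1 u2 v1 v2 ->
  cost u1 u2 = cost v1 v2 -> `|u1 - u2| = `|v1 - v2| ->
  tau1 u1 <= tau1 v1 /\ (tau1 u1 = tau1 v1 -> tau2 u2 <= tau2 v2).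
Proof.
move=> + eL eB; rewrite /lex_le eL eB !ltxx.
case=> [//|[_ [//|[_ [lt|[e le]]]]]].
  by split=> [|e]; [exact: ltW | move: lt; rewrite e ltxx].
by rewrite e.
Qed.

Lemma lex_le_fst u1 u2 v1 v2 : in01 u1 -> in01 v1 -> lex_le u1 u2 v1 v2 ->
  cost u1 u2 = cost v1 v2 -> `|u1 - u2| = `|v1 - v2| -> v1 <= u1.
Proof.
move=> h1 h2 uv eL eB.
exact: (decreasing01_le_inv tau1_decr h1 h2 (lex_le_tau uv eL eB).1).
Qed.

Lemma lex_le_anti u1 u2 v1 v2 : in01 u1 -> in01 u2 -> in01 v1 -> in01 v2 ->
  lex_le u1 u2 v1 v2 -> lex_le v1 v2 u1 u2 -> u1 = v1 /\ u2 = v2.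
Proof.
move=> hu1 hu2 hv1 hv2 uv vu.
have eL : cost u1 u2 = cost v1 v2 by apply/eqP; rewrite eq_le !lex_le_cost.
have eB : `|u1 - u2| = `|v1 - v2| by apply/eqP; rewrite eq_le lex_le_gap // lex_le_gap.
have e1 : u1 = v1 by apply/eqP; rewrite eq_le (lex_le_fst _ _ vu) ?(lex_le_fst _ _ uv).
subst v1; split=> //.
have le1 := (lex_le_tau uv eL eB).2 erefl.
have le2 := (lex_le_tau vu (esym eL) (esym eB)).2 erefl.
apply/eqP; rewrite eq_le (decreasing01_le_inv tau2_decr hv2 hu2 le2).
exact: (decreasing01_le_inv tau2_decr hu2 hv2 le1).
Qed.

Lemma lex_opt_eq b b' u1 u2 v1 v2 : b <= b' -> lex_opt b u1 u2 -> lex_opt b' v1 v2 ->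
  `|v1 - v2| <= b -> u1 = v1 /\ u2 = v2.
Proof.
move=> bb [h1 h2 hb hu] [h1' h2' hb' hv] hvb.
apply: lex_le_anti => //; first exact: hu.
by apply: hv => //; apply: le_trans bb.
Qed.

Lemma lex_opt_no_balanced_cut b u1 u2 v1 v2 l : lex_opt b u1 u2 -> in01 v1 -> in01 v2 ->
  cost v1 v2 <= cost u1 u2 -> u1 - u2 != 0 -> in01 l ->
  l * (v1 - v2) + (1 - l) * (u1 - u2) != 0.
Proof.
move=> [h1 h2 hb hu] hv1 hv2 Lle dn hl; apply/eqP => e.
set z1 := l * v1 + (1 - l) * u1; set z2 := l * v2 + (1 - l) * u2.
have hz : z1 - z2 = 0 by rewrite /z1 /z2 -e; ring.
have bz : lex_le u1 u2 z1 z2.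
  apply: hu; rewrite ?in01_convex_comb // hz normr0.
  exact: le_trans (normr_ge0 _) hb.
have Lz : cost z1 z2 <= cost u1 u2.
  have c1 := phi1_cvx hv1 h1 hl; have c2 := phi2_cvx hv2 h2 hl.
  move: hl Lle => /andP[l0 l1]; rewrite /cost; nra.
have eL : cost u1 u2 = cost z1 z2 by apply/eqP; rewrite eq_le lex_le_cost.
by move: (lex_le_gap bz eL); rewrite hz normr0 normr_le0 (negbTE dn).
Qed.

Lemma lex_opt_gap_sign b b' u1 u2 v1 v2 : b <= b' ->
  lex_opt b u1 u2 -> lex_opt b' v1 v2 ->
  (0 < u1 - u2 -> 0 <= v1 - v2) /\ (u1 - u2 < 0 -> v1 - v2 <= 0).
Proof.
move=> bb ou ov; have [h1 h2 hb _] := ou; have [h1' h2' _ hv] := ov.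
have Lle : cost v1 v2 <= cost u1 u2.
  by apply: lex_le_cost; apply: hv => //; exact: le_trans hb bb.
have cut := lex_opt_no_balanced_cut ou h1' h2' Lle.
split=> dp; rewrite leNgt; apply/negP => dq.
- pose l := (u1 - u2) / ((u1 - u2) - (v1 - v2)).
  have pp : 0 < (u1 - u2) - (v1 - v2) by lra.
  have hl : in01 l.
    by apply/andP; split; [apply: divr_ge0 | rewrite ler_pdivrMr //]; lra.
  move: (cut l (lt0r_neq0 dp) hl); rewrite /l; apply/negP; rewrite negbK.
  by apply/eqP; field; lra.
- pose l := (u2 - u1) / ((v1 - v2) - (u1 - u2)).
  have pp : 0 < (v1 - v2) - (u1 - u2) by lra.
  have hl : in01 l.
    by apply/andP; split; [apply: divr_ge0 | rewrite ler_pdivrMr //]; lra.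
  move: (cut l (ltr0_neq0 dp) hl); rewrite /l; apply/negP; rewrite negbK.
  by apply/eqP; field; lra.
Qed.

Lemma lex_opt_swap b b' u1 u2 v1 v2 r1 r2 s1 s2 :
  lex_opt b u1 u2 -> lex_opt b' v1 v2 ->
  in01 r1 -> in01 r2 -> in01 s1 -> in01 s2 ->
  `|s1 - s2| <= b -> `|r1 - r2| <= b' ->
  cost r1 r2 + cost s1 s2 <= cost u1 u2 + cost v1 v2 ->
  (`|s1 - s2| = `|u1 - u2| -> s1 <= u1) /\ (`|r1 - r2| = `|v1 - v2| -> r1 <= v1).
Proof.
move=> [h1 h2 hb hu] [h1' h2' hb' hv] hr1 hr2 hs1 hs2 sb rb Lsum.
have us := hu _ _ hs1 hs2 sb; have vr := hv _ _ hr1 hr2 rb.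
have l1 := lex_le_cost us; have l2 := lex_le_cost vr.
have e1 : cost u1 u2 = cost s1 s2 by apply/eqP; rewrite eq_le l1 /=; lra.
have e2 : cost v1 v2 = cost r1 r2 by apply/eqP; rewrite eq_le l2 /=; lra.
split=> eB; [exact: lex_le_fst h1 hs1 us e1 (esym eB) |
               exact: lex_le_fst h1' hr1 vr e2 (esym eB)].
Qed.

Lemma lex_opt_swap_fst b b' u1 u2 v1 v2 : lex_opt b u1 u2 -> lex_opt b' v1 v2 ->
  between u2 (u1 - v1 + v2) v2 -> between u2 (v1 - u1 + u2) v2 -> u1 = v1.
Proof.
move=> ou ov hr hs; have [h1 h2 hb _] := ou; have [h1' h2' hb' _] := ov.
have in01_between w : between u2 w v2 -> in01 w.
  by move: h2 h2' => /andP[? ?] /andP[? ?] [] /andP[? ?]; apply/andP; split; lra.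
have sum2 : u1 - v1 + v2 + (v1 - u1 + u2) = u2 + v2 by ring.
have cvx := convex01_between_sum phi2_cvx h2 h2' hr hs sum2.
have gr : u1 - (u1 - v1 + v2) = v1 - v2 by ring.
have gs : v1 - (v1 - u1 + u2) = u1 - u2 by ring.
have [] := lex_opt_swap ou ov h1 (in01_between _ hr) h1' (in01_between _ hs).
- by rewrite gs.
- by rewrite gr.
- by rewrite /cost; lra.
rewrite gr gs => /(_ erefl) vu /(_ erefl) uv.
by apply/eqP; rewrite eq_le uv vu.
Qed.

Lemma lex_opt_swap_snd b b' u1 u2 v1 v2 : lex_opt b u1 u2 -> lex_opt b' v1 v2 ->
  between u1 (v1 - v2 + u2) v1 -> between u1 (u1 - u2 + v2) v1 -> u2 = v2.
Proof.
move=> ou ov hr hs; have [h1 h2 hb _] := ou; have [h1' h2' hb' _] := ov.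
have in01_between w : between u1 w v1 -> in01 w.
  by move: h1 h1' => /andP[? ?] /andP[? ?] [] /andP[? ?]; apply/andP; split; lra.
have sum1 : v1 - v2 + u2 + (u1 - u2 + v2) = u1 + v1 by ring.
have cvx := convex01_between_sum phi1_cvx h1 h1' hr hs sum1.
have gr : v1 - v2 + u2 - u2 = v1 - v2 by ring.
have gs : u1 - u2 + v2 - v2 = u1 - u2 by ring.
have [] := lex_opt_swap ou ov (in01_between _ hr) h2 (in01_between _ hs) h2'.
- by rewrite gs.
- by rewrite gr.
- by rewrite /cost; lra.
rewrite gr gs => /(_ erefl) su /(_ erefl) rv.
by apply/eqP; rewrite eq_le; apply/andP; split; lra.
Qed.

Lemma lex_opt_spread b b' u1 u2 v1 v2 : lex_opt b u1 u2 -> lex_opt b' v1 v2 ->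
  (b < v1 - v2 -> u1 <= v1 /\ v2 <= u2) /\ (v1 - v2 < - b -> v1 <= u1 /\ u2 <= v2).
Proof.
move=> ou ov; have [_ _ hb _] := ou; move: hb; rewrite ler_norml => /andP[lb ub].
have fst := lex_opt_swap_fst ou ov; have snd := lex_opt_swap_snd ou ov.
split=> gap; split; rewrite leNgt; apply/negP => lt.
- have [|vu2] := leP u2 v2; first lra.
  suff : u1 = v1 by lra.
  by apply: fst; right; apply/andP; split; lra.
- suff : u2 = v2 by lra.
  by apply: snd; left; apply/andP; split; lra.
- have [|uv2] := leP v2 u2; first lra.
  suff : u1 = v1 by lra.
  by apply: fst; left; apply/andP; split; lra.
- suff : u2 = v2 by lra.
  by apply: snd; right; apply/andP; split; lra.
Qed.

Lemma lex_opt_monotone b1 b2 b3 u1 u2 v1 v2 w1 w2 : b1 <= b2 -> b2 <= b3 ->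
  lex_opt b1 u1 u2 -> lex_opt b2 v1 v2 -> lex_opt b3 w1 w2 ->
  between u1 v1 w1 /\ between u2 v2 w2.
Proof.
move=> b12 b23 ou ov ow.
have [hv|hv] := lerP `|v1 - v2| b1.
  by have [-> ->] := lex_opt_eq b12 ou ov hv; split; apply: between_eql.
have [hw|hw] := lerP `|w1 - w2| b2.
  by have [-> ->] := lex_opt_eq b23 ov ow hw; split; apply: between_eqr.
have b1_ge0 : 0 <= b1 by have [_ _ hb _] := ou; apply: le_trans hb.
have [sgn_pos sgn_neg] := lex_opt_gap_sign b23 ov ow.
have [uv_pos uv_neg] := lex_opt_spread ou ov.
have [vw_pos vw_neg] := lex_opt_spread ov ow.
move: hv hw; rewrite !ltr_normr => /orP[hv|hv] /orP[hw|hw].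
- have [? ?] := uv_pos hv; have [? ?] := vw_pos hw.
  by split; [left|right]; apply/andP.
- have := sgn_pos ltac:(lra); lra.
- have := sgn_neg ltac:(lra); lra.
- have [? ?] := uv_neg ltac:(lra); have [? ?] := vw_neg ltac:(lra).
  by split; [right|left]; apply/andP.
Qed.

End LexProgram.

Section Threshold.
Variable R : realFieldType.
Implicit Types t p r h : R.

Lemma thrE t p r : thr t p r = (t < r)%R%:R + p * (r == t)%R%:R.
Proof. by rewrite /thr; case: ltgtP; rewrite ?mulr0 ?mulr1 ?addr0 ?add0r. Qed.

Lemma thr_ge0 t p r : 0 <= p -> 0 <= thr t p r.
Proof. by move=> hp; rewrite /thr; case: ifP => // _; case: ifP. Qed.

Lemma thr_in01 t p r : in01 p -> in01 (thr t p r).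
Proof.
move=> /andP[p0 p1]; apply/andP; split; first exact: thr_ge0.
by rewrite /thr; case: ifP => // _; case: ifP.
Qed.

Lemma thr_exchange_ge0 t p r h : in01 h -> in01 p -> 0 <= (h - thr t p r) * (t - r).
Proof.
move=> /andP[h0 h1] /andP[p0 p1]; rewrite /thr; case: ltgtP => [tr|rt|->].
- by apply: mulr_le0; lra.
- by apply: mulr_ge0; lra.
- by rewrite subrr mulr0.
Qed.

Lemma thr_total t p t' p' : in01 p -> in01 p' ->
  (forall r, thr t p r <= thr t' p' r) \/ (forall r, thr t' p' r <= thr t p r).
Proof.
have lt_le t1 q1 t2 q2 : in01 q1 -> in01 q2 -> t1 < t2 -> forall r, thr t2 q2 r <= thr t1 q1 r.
  move=> /andP[? ?] /andP[? ?] lt r; rewrite {1}/thr; case: ltgtP => [h|h|<-].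
  - by rewrite /thr (lt_trans lt h).
  - exact: thr_ge0.
  - by rewrite /thr lt.
move=> hp hp'; case: (ltgtP t t') => [h|h|<-].
- by right; apply: lt_le.
- by left; apply: lt_le.
- move: hp hp' => /andP[? ?] /andP[? ?].
  by case: (lerP p p') => h; [left|right] => r; rewrite /thr; do 2 case: ifP => //; lra.
Qed.

(* The threshold is the largest score value [t] with at least [g] scores
   [>= t]; the randomization [p] at [t] then absorbs the remainder. *)
Lemma exists_thr_sum n (P : pred 'I_n) (s : 'I_n -> R) (g : R) :
  (exists i, P i) -> 0 <= g <= #|P|%:R ->
  exists2 i0, P i0 & exists2 p, in01 p & \sum_(i < n | P i) thr (s i0) p (s i) = g.
Proof.
move=> [iP HiP] /andP[g0 gP].
pose cnt v := \sum_(i < n | P i) (v <= s i)%R%:R : R.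
pose gtc v := \sum_(i < n | P i) (v < s i)%R%:R : R.
pose eqc v := \sum_(i < n | P i) (s i == v)%R%:R : R.
have cntE v : cnt v = gtc v + eqc v.
  rewrite /cnt /gtc /eqc -big_split /=; apply: eq_bigr => i _.
  by case: (ltgtP v (s i)) => _; rewrite ?addr0 ?add0r.
have [imin Pmin Hmin] := arg_minP s HiP.
have Cmin : P imin && (g <= cnt (s imin)).
  rewrite Pmin /= /cnt (eq_bigr (fun _ => 1)) ?sumr_const // => i Pi.
  by rewrite Hmin.
have [i0 /andP[P0 C0] Hmax] :=
  @arg_maxP _ _ _ imin [pred i | P i && (g <= cnt (s i))] s Cmin.
set t := s i0.
have gtle : gtc t <= g.
  rewrite leNgt; apply/negP => lt.
  have [i1 Q1] : exists i1, P i1 && (t < s i1).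
    apply/existsP; apply: contraLR lt => /existsPn none.
    by rewrite -leNgt /gtc big1 // => i Pi; move: (none i); rewrite Pi /= => /negbTE ->.
  have [i2 /andP[P2 T2] H2] := @arg_minP _ _ _ i1 [pred i | P i && (t < s i)] s Q1.
  have e : cnt (s i2) = gtc t.
    apply: eq_bigr => i Pi; suff -> : (s i2 <= s i) = (t < s i) by [].
    apply/idP/idP => [|h]; first exact: lt_le_trans.
    by apply: H2; rewrite inE Pi h.
  have := Hmax i2; rewrite inE P2 e (ltW lt) => /(_ isT) h.
  by have := lt_le_trans T2 h; rewrite ltxx.
have eq_gt0 : 0 < eqc t.
  rewrite /eqc (bigD1 i0) //= eqxx ltr_pwDl //.
  by apply: sumr_ge0 => i _; exact: ler0n.
exists i0 => //; exists ((g - gtc t) / eqc t).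
  apply/andP; split; first by apply: divr_ge0; [rewrite subr_ge0 | exact: ltW].
  by rewrite ler_pdivrMr // mul1r lerBlDl -cntE.
under eq_bigr do rewrite thrE.
by rewrite big_split /= -mulr_sumr divfK ?gt_eqF // addrC subrK.
Qed.

End Threshold.

Section Gabos.
Variables (R : realFieldType) (X : Type) (N M : nat) (x : 'I_N -> X)
  (a : 'I_N -> 'I_2) (y : 'I_N -> bool) (c : 'I_2 -> X -> 'I_M) (k : fairness).

Local Notation score := (gabos_score R x a y c).
Local Notation freq := (gabos_freq R x a y c).

Definition dscore j i := score (x i) j.

Lemma dscore_ge0 j i : 0 <= dscore j i.
Proof. exact: divr_ge0. Qed.

Lemma dscore_gt0 j i : a i == j -> y i -> 0 < dscore j i.
Proof.
move=> /eqP ai yi; apply: divr_gt0; rewrite ltr0n; apply/card_gt0P;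
  by exists i; rewrite !inE ai !eqxx ?yi.
Qed.

Lemma gabos_freq_mul_card j m :
  freq j m * #|[pred i | (a i == j) && (c j (x i) == m)]|%:R =
  #|[pred i | (a i == j) && y i && (c j (x i) == m)]|%:R.
Proof.
rewrite /gabos_freq; set A := #|_|; set B := #|_|.
have le_AB : (A <= B)%N.
  apply: subset_leq_card; apply/subsetP => i; rewrite !inE.
  by case: (a i == j); case: (y i).
have [B0|B_gt0] := posnP B; last by rewrite divfK // pnatr_eq0 -lt0n.
by move: le_AB; rewrite B0 leqn0 => /eqP ->; rewrite !mul0r.
Qed.

Lemma gabos_calibrated j (h : R -> R) :
  \sum_(i < N | a i == j) h (dscore j i) * (y i)%:R =
  \sum_(i < N | a i == j) h (dscore j i) * dscore j i.
Proof.
rewrite (partition_big (fun i => c j (x i)) predT) //=.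
rewrite [RHS](partition_big (fun i => c j (x i)) predT) //=.
apply: eq_bigr => m _.
have cellE i : (a i == j) && (c j (x i) == m) -> dscore j i = freq j m.
  by move=> /andP[_ /eqP e]; rewrite /dscore /gabos_score e.
rewrite (eq_bigr (fun i => h (freq j m) * (y i)%:R)); last by move=> i /cellE ->.
rewrite [RHS](eq_bigr (fun i => h (freq j m) * freq j m)); last by move=> i /cellE ->.
have count_pos : \sum_(i < N | (a i == j) && (c j (x i) == m)) (y i)%:R =
    #|[pred i | (a i == j) && y i && (c j (x i) == m)]|%:R :> R.
  rewrite (eq_bigr (fun i => if y i then 1 else 0)); last by move=> i _; case: (y i).
  rewrite -big_mkcondr /= sumr_const; congr (_%:R).
  apply: eq_card => i; rewrite !inE /= unfold_in /=.
  by case: (a i == j); case: (y i); case: (_ == m).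
have count_cell : #|[pred i | (a i == j) && (c j (x i) == m)]| =
    #|(fun i : 'I_N => (a i == j) && (c j (x i) == m))| by apply: eq_card.
rewrite -mulr_sumr count_pos -gabos_freq_mul_card sumr_const -mulr_natr mulrA.
by rewrite count_cell -mulr_natr; ring.
Qed.

Definition fair_rate j (h : R -> R) : R :=
  (\sum_(i < N | (a i == j) && bcond y k i) h (dscore j i)) /
  #|[pred i | (a i == j) && bcond y k i]|%:R.

Definition group_err j (h : R -> R) : R :=
  \sum_(i < N | a i == j) (if y i then 1 - h (dscore j i) else h (dscore j i)).

Definition fair_weight j i : R := if k is EO then dscore j i else 1.

(* Under equal opportunity, calibration trades the labels for the scores. *)
Lemma fair_sum_weight j h :
  \sum_(i < N | (a i == j) && bcond y k i) h (dscore j i) =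
  \sum_(i < N | a i == j) h (dscore j i) * fair_weight j i.
Proof.
rewrite /fair_weight; case: k => /=.
  by apply: eq_big => [i|i _]; rewrite ?andbT ?mulr1.
rewrite -gabos_calibrated big_mkcondr /=; apply: eq_bigr => i _.
by case: (y i); rewrite ?mulr1 ?mulr0.
Qed.

Lemma group_err_sub j h1 h2 : group_err j h1 - group_err j h2 =
  \sum_(i < N | a i == j) (h1 (dscore j i) - h2 (dscore j i)) * (1 - 2 * dscore j i).
Proof.
pose d i := h1 (dscore j i) - h2 (dscore j i).
have -> : group_err j h1 - group_err j h2 =
    \sum_(i < N | a i == j) (d i - 2 * (d i * (y i)%:R)).
  by rewrite /group_err -sumrB; apply: eq_bigr => i _; case: (y i); rewrite /d /=; ring.
rewrite sumrB -mulr_sumr (gabos_calibrated j (fun r => h1 r - h2 r)) mulr_sumr -sumrB.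
by apply: eq_bigr => i _; rewrite /d; ring.
Qed.

Definition err_scale (t : R) : R := if k is EO then t^-1 else 2.

Lemma err_scale_ge0 t : (k = EO -> 0 < t) -> 0 <= err_scale t.
Proof. by rewrite /err_scale; case: k => // /(_ erefl) t_gt0; rewrite invr_ge0 ltW. Qed.

Lemma group_err_sub_thr j t p h : (k = EO -> 0 < t) ->
  \sum_(i < N | (a i == j) && bcond y k i) h (dscore j i) =
  \sum_(i < N | (a i == j) && bcond y k i) thr t p (dscore j i) ->
  group_err j h - group_err j (thr t p) = \sum_(i < N | a i == j)
    (h (dscore j i) - thr t p (dscore j i)) * (t - dscore j i) * err_scale t.
Proof.
move=> t_gt0 e; pose d i := h (dscore j i) - thr t p (dscore j i).
have d_weight0 : \sum_(i < N | a i == j) d i * fair_weight j i = 0.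
  under eq_bigr do rewrite mulrBl.
  by rewrite sumrB -!fair_sum_weight e subrr.
(* subtracting this multiple of the vanishing sum makes each summand
   proportional to [t - dscore j i] *)
pose kap : R := if k is EO then t^-1 - 2 else 1 - 2 * t.
rewrite group_err_sub; transitivity (\sum_(i < N | a i == j) d i * (1 - 2 * dscore j i)
  - kap * \sum_(i < N | a i == j) d i * fair_weight j i).
  by rewrite d_weight0 mulr0 subr0.
rewrite mulr_sumr -sumrB; apply: eq_bigr => i _; rewrite /d /kap /fair_weight /err_scale.
move: t_gt0; case: k => [_|/(_ erefl) t_gt0]; first by ring.
by field; rewrite gt_eqF.
Qed.

Lemma group_err_thr_le j t p h : in01 p -> (k = EO -> 0 < t) ->
  (forall i, a i == j -> in01 (h (dscore j i))) ->
  \sum_(i < N | (a i == j) && bcond y k i) h (dscore j i) =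
  \sum_(i < N | (a i == j) && bcond y k i) thr t p (dscore j i) ->
  group_err j (thr t p) <= group_err j h.
Proof.
move=> hp t_gt0 hh e; rewrite -subr_ge0 (group_err_sub_thr t_gt0 e).
apply: sumr_ge0 => i /hh hi; apply: mulr_ge0; last exact: err_scale_ge0.
exact: thr_exchange_ge0.
Qed.

Lemma ord2P (o : 'I_2) : o = g1 \/ o = g2.
Proof. by case: o => [[|[|n]] h]; [left|right|]; rewrite // /g1 /g2; apply: val_inj. Qed.

Lemma loss_clf tt pp : loss x a y (clf score tt pp) =
  (group_err g1 (thr (tt g1) (pp g1)) + group_err g2 (thr (tt g2) (pp g2))) / N%:R.
Proof.
rewrite /loss (bigID (fun i => a i == g1)) /=; congr ((_ + _) / _).
  by apply: eq_bigr => i /eqP e; rewrite /clf e.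
apply: eq_big => [i|i]; first by case: (ord2P (a i)) => ->.
by case: (ord2P (a i)) => -> // _; rewrite /clf.
Qed.

Lemma group_rate_clf tt pp j :
  group_rate x a y k (clf score tt pp) j = fair_rate j (thr (tt j) (pp j)).
Proof.
rewrite /group_rate /fair_rate; congr (_ / _).
by apply: eq_bigr => i /andP[/eqP e _]; rewrite /clf e.
Qed.

Lemma bias_clf tt pp : bias x a y k (clf score tt pp) =
  fair_rate g1 (thr (tt g1) (pp g1)) - fair_rate g2 (thr (tt g2) (pp g2)).
Proof. by rewrite /bias !group_rate_clf. Qed.

Lemma fair_rate_in01 j h : (forall i, a i == j -> in01 (h (dscore j i))) ->
  in01 (fair_rate j h).
Proof. by move=> hh; apply: avg_in01 => i /andP[/hh]. Qed.

Lemma fair_rate_thr_in01 j t p : in01 p -> in01 (fair_rate j (thr t p)).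
Proof. by move=> hp; apply: fair_rate_in01 => i _; apply: thr_in01. Qed.

Lemma rate_in01 j t p : in01 p -> in01 (rate x a score j t p).
Proof. by move=> hp; apply: avg_in01 => i _; apply: thr_in01. Qed.

Lemma is_nthr_thr j t p : in01 p -> is_nthr x a score j (1 - rate x a score j t p) t p.
Proof.
move=> hp; have /andP[r0 r1] := rate_in01 j t hp.
by split; [apply/andP; split; lra | split=> //; ring].
Qed.

Lemma postproc_loss_le beta tau tt pp tt' pp' :
  postproc_opt x a y k score beta tau tt pp -> (forall j, in01 (pp' j)) ->
  `|bias x a y k (clf score tt' pp')| <= beta ->
  loss x a y (clf score tt pp) <= loss x a y (clf score tt' pp').
Proof.
move=> [_ [_ opt]] hp' hb'.
have := opt (fun j => 1 - rate x a score j (tt' j) (pp' j)) tt' pp'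
  (fun j => is_nthr_thr j (tt' j) (hp' j)) hb'.
by case=> [/ltW|[-> _]].
Qed.

Hypothesis fair_group_nonempty : forall j, exists i, (a i == j) && bcond y k i.

Lemma card_fair_gt0 j : (0 < #|[pred i | (a i == j) && bcond y k i]|)%N.
Proof. by have [i hi] := fair_group_nonempty j; apply/card_gt0P; exists i. Qed.

Lemma card_group_gt0 j : (0 < #|[pred i | a i == j]|)%N.
Proof. by have [i /andP[hi _]] := fair_group_nonempty j; apply/card_gt0P; exists i. Qed.

Lemma fair_sum_rate j h : \sum_(i < N | (a i == j) && bcond y k i) h (dscore j i) =
  fair_rate j h * #|[pred i | (a i == j) && bcond y k i]|%:R.
Proof. by rewrite /fair_rate divfK // pnatr_eq0 -lt0n card_fair_gt0. Qed.

Lemma thr_for_ex j u : exists tp : R * R, in01 u ->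
  [/\ in01 tp.2, (k = EO -> 0 < tp.1) & fair_rate j (thr tp.1 tp.2) = u].
Proof.
have [hu|_] := boolP (in01 u); last by exists (0, 0).
have cpos : 0 < #|[pred i | (a i == j) && bcond y k i]|%:R :> R.
  by rewrite ltr0n card_fair_gt0.
have /andP[u0 u1] := hu.
have [|i0 Pi0 [p hp e]] := exists_thr_sum (dscore j) (fair_group_nonempty j)
  (g := u * #|[pred i | (a i == j) && bcond y k i]|%:R).
  by apply/andP; split; [apply: mulr_ge0 | apply: ler_piMl]; rewrite // ltW.
exists (dscore j i0, p) => _; split => //=.
  by move=> ek; move: Pi0 => /andP[ai]; rewrite ek; apply: dscore_gt0.
by rewrite /fair_rate e mulfK // gt_eqF.
Qed.

Definition thr_for j u : R * R := proj1_sig (cid (thr_for_ex j u)).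

Lemma thr_forP j u : in01 u -> [/\ in01 (thr_for j u).2,
  (k = EO -> 0 < (thr_for j u).1) & fair_rate j (thr (thr_for j u).1 (thr_for j u).2) = u].
Proof. exact: (proj2_sig (cid (thr_for_ex j u))). Qed.

Definition opt_clf j u := thr (thr_for j u).1 (thr_for j u).2.
Definition opt_loss j u := group_err j (opt_clf j u) / N%:R.
Definition opt_tau j u := 1 - rate x a score j (thr_for j u).1 (thr_for j u).2.

Lemma opt_clf_in01 j u r : in01 u -> in01 (opt_clf j u r).
Proof. by case/(thr_forP j) => hp _ _; apply: thr_in01. Qed.

Lemma opt_clf_le j u v r : in01 u -> in01 v -> u <= v -> opt_clf j u r <= opt_clf j v r.
Proof.
move=> hu hv; rewrite le_eqVlt => /orP[/eqP -> // | uv].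
have [pu _ eu] := thr_forP j hu; have [pv _ ev] := thr_forP j hv.
have [|vu] := thr_total (thr_for j u).1 (thr_for j v).1 pu pv; first exact.
suff : fair_rate j (opt_clf j v) <= fair_rate j (opt_clf j u) by rewrite /opt_clf eu ev leNgt uv.
rewrite ler_pdivlMr ?ltr0n ?card_fair_gt0 // -fair_sum_rate.
by apply: ler_sum => i _; apply: vu.
Qed.

Lemma opt_tau_decr j : decreasing01 (opt_tau j).
Proof.
move=> u v hu hv uv.
have le r := opt_clf_le j r hu hv (ltW uv).
have [_ _ eu] := thr_forP j hu; have [_ _ ev] := thr_forP j hv.
rewrite /opt_tau ltrD2l ltrN2 -subr_gt0 /rate -mulrBl.
apply: divr_gt0; last by rewrite ltr0n card_group_gt0.
rewrite -sumrB (bigID (bcond y k)) /=.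
apply: lt_le_trans (_ : 0 < \sum_(i < N | (a i == j) && bcond y k i)
  (opt_clf j v (dscore j i) - opt_clf j u (dscore j i))) _.
  by rewrite sumrB !fair_sum_rate /opt_clf eu ev -mulrBl mulr_gt0 ?subr_gt0 ?ltr0n ?card_fair_gt0.
by rewrite lerDl; apply: sumr_ge0 => i _; rewrite subr_ge0 le.
Qed.

Lemma opt_loss_convex j : convex01 (opt_loss j).
Proof.
move=> u v l hu hv hl; set w := l * u + (1 - l) * v.
have [pw tw ew] := thr_forP j (in01_convex_comb hu hv hl).
have [_ _ eu] := thr_forP j hu; have [_ _ ev] := thr_forP j hv.
pose h r := l * opt_clf j u r + (1 - l) * opt_clf j v r.
have h01 i : a i == j -> in01 (h (dscore j i)).
  by move=> _; apply: in01_convex_comb; rewrite ?opt_clf_in01.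
have same_rate : \sum_(i < N | (a i == j) && bcond y k i) h (dscore j i) =
    \sum_(i < N | (a i == j) && bcond y k i) opt_clf j w (dscore j i).
  rewrite [RHS]fair_sum_rate ew /h big_split /= -!mulr_sumr !fair_sum_rate.
  by rewrite eu ev; ring.
have errE : group_err j h =
    l * group_err j (opt_clf j u) + (1 - l) * group_err j (opt_clf j v).
  rewrite /group_err !mulr_sumr -big_split /=; apply: eq_bigr => i _.
  by rewrite /h; case: (y i); ring.
have := group_err_thr_le pw tw h01 same_rate; rewrite errE => le_err.
rewrite /opt_loss !mulrA -!mulrDl; apply: ler_wpM2r => //.
by rewrite invr_ge0 ler0n.
Qed.

Lemma fair_rate_eq_on j h1 h2 : (forall r, h1 r <= h2 r) ->
  fair_rate j h1 = fair_rate j h2 ->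
  forall i, a i == j -> fair_weight j i != 0 -> h1 (dscore j i) = h2 (dscore j i).
Proof.
move=> le e.
have sum0 : \sum_(i < N | a i == j) (h2 (dscore j i) - h1 (dscore j i)) * fair_weight j i = 0.
  under eq_bigr do rewrite mulrBl.
  by rewrite sumrB -!fair_sum_weight !fair_sum_rate e subrr.
have ge0 i : a i == j -> 0 <= (h2 (dscore j i) - h1 (dscore j i)) * fair_weight j i.
  move=> _; rewrite mulr_ge0 ?subr_ge0 //.
  by rewrite /fair_weight; case: k => //; apply: dscore_ge0.
move=> i ai wn; have /eqP := psumr_eq0P ge0 sum0 ai.
by rewrite mulf_eq0 (negbTE wn) orbF subr_eq0 => /eqP ->.
Qed.

Lemma postproc_group_err_min beta tau tt pp j t p :
  postproc_opt x a y k score beta tau tt pp -> in01 p ->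
  fair_rate j (thr t p) = fair_rate j (thr (tt j) (pp j)) ->
  group_err j (thr (tt j) (pp j)) <= group_err j (thr t p).
Proof.
move=> opt hp e; have [nthr [hb _]] := opt.
pose tt' j' := if j' == j then t else tt j'.
pose pp' j' := if j' == j then p else pp j'.
have hp' j' : in01 (pp' j') by rewrite /pp'; case: eqP => // _; have [_ []] := nthr j'.
have same_rate j' : fair_rate j' (thr (tt' j') (pp' j')) = fair_rate j' (thr (tt j') (pp j')).
  by rewrite /tt' /pp'; case: eqP => // ->.
have hb' : `|bias x a y k (clf score tt' pp')| <= beta.
  by rewrite bias_clf !same_rate -bias_clf.
have [i _] := fair_group_nonempty j.
have N_gt0 : 0 < (N%:R : R)^-1 by rewrite invr_gt0 ltr0n (leq_ltn_trans (leq0n i)).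
have := postproc_loss_le opt hp' hb'; rewrite !loss_clf ler_pM2r // /tt' /pp'.
by case: (ord2P j) => ->; rewrite /= ?lerD2l ?lerD2r.
Qed.

Lemma postproc_clf_eq beta tau tt pp j i :
  postproc_opt x a y k score beta tau tt pp -> a i == j ->
  thr (tt j) (pp j) (dscore j i) =
  opt_clf j (fair_rate j (thr (tt j) (pp j))) (dscore j i).
Proof.
move=> opt ai; have [nthr _] := opt; have [_ [hp _]] := nthr j.
set u := fair_rate j _.
have [hq t_gt0 eu] := thr_forP j (fair_rate_thr_in01 j (tt j) hp).
have [w0|wn] := eqVneq (fair_weight j i) 0; last first.
  have [le|ge] := thr_total (tt j) (thr_for j u).1 hp hq.
    by apply: fair_rate_eq_on ai wn => //; rewrite eu.
  by symmetry; apply: fair_rate_eq_on ai wn => //; rewrite eu.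
(* [i] is invisible to the fairness constraint; only loss-optimality pins it down. *)
have [ek S0] : k = EO /\ dscore j i = 0.
  by move: w0; rewrite /fair_weight; case: k => [/eqP|]; rewrite ?oner_eq0.
have t_pos := t_gt0 ek.
have opt0 : thr (thr_for j u).1 (thr_for j u).2 (dscore j i) = 0.
  by rewrite S0 /thr ltNge (ltW t_pos) /= lt_eqF.
rewrite /opt_clf opt0; apply/eqP; rewrite eq_le thr_ge0 ?andbT; last by case/andP: hp.
have le_err := postproc_group_err_min opt hq eu.
have same_sum : \sum_(i' < N | (a i' == j) && bcond y k i') thr (tt j) (pp j) (dscore j i') =
    \sum_(i' < N | (a i' == j) && bcond y k i') thr (thr_for j u).1 (thr_for j u).2 (dscore j i').
  by rewrite !fair_sum_rate eu.
(* the exchange sum dominates its term at [i] *)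
suff : thr (tt j) (pp j) (dscore j i) <=
    group_err j (thr (tt j) (pp j)) - group_err j (thr (thr_for j u).1 (thr_for j u).2).
  by lra.
rewrite (group_err_sub_thr t_gt0 same_sum) (bigD1 i) //= opt0.
have -> : (thr (tt j) (pp j) (dscore j i) - 0) * ((thr_for j u).1 - dscore j i) *
    err_scale (thr_for j u).1 = thr (tt j) (pp j) (dscore j i).
  by rewrite S0 !subr0 /err_scale ek mulfK ?gt_eqF.
rewrite lerDl; apply: sumr_ge0 => i' _; rewrite mulr_ge0 ?err_scale_ge0 //.
by rewrite thr_exchange_ge0 ?thr_in01.
Qed.

Lemma postproc_lex_opt beta tau tt pp :
  postproc_opt x a y k score beta tau tt pp ->
  lex_opt (opt_loss g1) (opt_loss g2) (opt_tau g1) (opt_tau g2) beta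
    (fair_rate g1 (thr (tt g1) (pp g1))) (fair_rate g2 (thr (tt g2) (pp g2))).
Proof.
move=> opt; have [nthr [hb lex]] := opt.
have hu j : in01 (fair_rate j (thr (tt j) (pp j))).
  by have [_ [hp _]] := nthr j; apply: fair_rate_thr_in01.
have errE j : group_err j (thr (tt j) (pp j)) =
    group_err j (opt_clf j (fair_rate j (thr (tt j) (pp j)))).
  by apply: eq_bigr => i ai; rewrite (postproc_clf_eq opt ai).
have tauE j : tau j = opt_tau j (fair_rate j (thr (tt j) (pp j))).
  have [_ [_ e]] := nthr j.
  transitivity (1 - rate x a score j (tt j) (pp j)); first by rewrite e; ring.
  rewrite /opt_tau /rate; congr (1 - _ / _).
  by apply: eq_bigr => i ai; rewrite (postproc_clf_eq opt ai).
split; rewrite ?hu -?bias_clf // => v1 v2 hv1 hv2 hvb.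
pose tp j := if j == g1 then thr_for g1 v1 else thr_for g2 v2.
pose tt' j := (tp j).1; pose pp' j := (tp j).2.
have [p1 _ e1] := thr_forP g1 hv1; have [p2 _ e2] := thr_forP g2 hv2.
have hp' j : in01 (pp' j) by rewrite /pp' /tp; case: ifP.
have Bc : bias x a y k (clf score tt' pp') = v1 - v2 by rewrite bias_clf /= e1 e2.
have := lex (fun j => 1 - rate x a score j (tt' j) (pp' j)) tt' pp'
  (fun j => is_nthr_thr j (tt' j) (hp' j)) ltac:(by rewrite Bc); cbv zeta.
by rewrite !loss_clf !errE Bc bias_clf !tauE /lex_le /cost /opt_loss !mulrDl.
Qed.

End Gabos.

Theorem theorem4 (R : realType) (X : Type) (N M : nat)
  (x : 'I_N -> X) (a : 'I_N -> 'I_2) (y : 'I_N -> bool)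
  (c : 'I_2 -> X -> 'I_M) (k : fairness)
  (Hcells : forall (j : 'I_2) (m : 'I_M), exists i : 'I_N, a i = j /\ c j (x i) = m)
  (Hwd : k = EO -> forall j : 'I_2, exists i : 'I_N, a i = j /\ y i)
  (sel_tau sel_t sel_p : R -> 'I_2 -> R)
  (Hsel : forall beta : R, 0 < beta ->
     postproc_opt x a y k (gabos_score R x a y c) beta
       (sel_tau beta) (sel_t beta) (sel_p beta)) :
  forall (x0 : X) (j : 'I_2) (b1 b2 b3 : R), 0 < b1 -> b1 < b2 -> b2 < b3 ->
    let f := fun b => clf (gabos_score R x a y c) (sel_t b) (sel_p b) x0 j in
    (f b1 <= f b2 <= f b3) \/ (f b3 <= f b2 <= f b1).
Proof.
move=> x0 j b1 b2 b3 b1_gt0 b12 b23 f.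
have ne j' : exists i, (a i == j') && bcond y k i.
  case ek: k; first by have [i [ai _]] := Hcells j' (c j' x0); exists i; rewrite ai eqxx.
  by have [i [ai yi]] := Hwd ek j'; exists i; rewrite ai eqxx.
have [i0 [ai0 ci0]] := Hcells j (c j x0).
pose u b j' := fair_rate x a y c k j' (thr (sel_t b j') (sel_p b j')).
have fE b : 0 < b -> f b = opt_clf x c ne j (u b j) (dscore R x a y c j i0).
  move=> b_gt0; rewrite -(postproc_clf_eq ne (Hsel b b_gt0)) ?ai0 //.
  by rewrite /f /clf /dscore /gabos_score ci0.
have b2_gt0 := lt_trans b1_gt0 b12; have b3_gt0 := lt_trans b2_gt0 b23.
have [m1 m2] := lex_opt_monotone (opt_loss_convex x c ne g1) (opt_loss_convex x c ne g2)
  (opt_tau_decr x c ne g1) (opt_tau_decr x c ne g2) (ltW b12) (ltW b23)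
  (postproc_lex_opt ne (Hsel b1 b1_gt0)) (postproc_lex_opt ne (Hsel b2 b2_gt0))
  (postproc_lex_opt ne (Hsel b3 b3_gt0)).
have u_in01 b : 0 < b -> in01 (u b j).
  by move=> b_gt0; have [_ [hp _]] := (Hsel b b_gt0).1 j; apply: fair_rate_thr_in01.
pose g v := opt_clf x c ne j v (dscore R x a y c j i0).
rewrite !fE //; apply: (@between_homo _ g); rewrite ?u_in01 //.
  by move=> s t; apply: opt_clf_le.
by case: (ord2P j) => ->.
Qed.
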